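(* Let $G=(V,E)$ be an unweighted undirected graph, let $s\in V$ be a source, and suppose we are given, for every $v\in V$, the distance $d_s(v)$ from $s$, the number $\sigma_s(v)$ of shortest $s$-$v$ paths, and the list $P_s(v)$ of predecessors of $v$ (neighbors immediately preceding $v$ on shortest $s$-$v$ paths) in $G$. Let $\beta$ be a batch of edge insertions and let $d_{max}$ be the maximum distance from $s$ (the distance of the node furthest from $s$). Consider the algorithm \textsf{UpdateSSSP}, which assumes all nodes are initially colored white: (i) Create an array $Q[\,]$ of $d_{max}$ empty FIFO queues. For each $e=\{u,v\}\in\beta$: insert $e$ into $E$; if $d_s(u)<d_s(v)$, enqueue $v$ into $Q[d_s(u)+1]$; if $d_s(v)<d_s(u)$, enqueue $u$ into $Q[d_s(v)+1]$. (ii) For $k=1,2,\dots$ while $k<d_{max}$: while $Q[k]$ is nonempty, dequeue $w$ from $Q[k]$; if $w$ is black, skip it; otherwise color $w$ black, set $d_s(w)\leftarrow k$, $P_s(w)\leftarrow\emptyset$, $\sigma_s(w)\leftarrow 0$, and for each incident edge $\{z,w\}$: if $d_s(w)=d_s(z)+1$, add $z$ to $P_s(w)$ and set $\sigma_s(w)\leftarrow\sigma_s(w)+\sigma_s(z)$; if $z$ is white and $d_s(z)\ge d_s(w)+1$, color $z$ gray and enqueue $z$ into $Q[k+1]$. (iii) Reset to white all nodes that have been in some queue. Then the time required by \textsf{UpdateSSSP} to update the distances, the numbers of shortest paths and the lists of predecessors is $O(|\beta|+\|A\|+d_{max})$.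
   Context: $A$ denotes the set of affected nodes, i.e. nodes whose distance from $s$ or whose number of shortest paths from $s$ changes as a consequence of inserting the batch $\beta$; $\|A\|$ denotes $|A|$ plus the number of edges having at least one endpoint in $A$; $|\beta|$ is the number of edges in the batch. *)

(* Graphs: a finite vertex type V with a symmetric,
   irreflexive edge relation E : rel V (simple undirected unweighted graph). *)
From mathcomp Require Import all_boot.
Set Implicit Arguments. Unset Strict Implicit. Unset Printing Implicit Defensive.

Section SSSP.
Variable V : finType.

(** Number of walks with exactly n edges from s to v (as n-tuples of the
    vertices visited after s). *)
Definition walk_count (E : rel V) (s v : V) (n : nat) : nat :=
  #|[set t : n.-tuple V | path E s t && (last s t == v)]|.

(** Distance d_s(v) from s to v: [Some n] with n the least length of an
    s-v walk, or [None] (= +infinity) if v is unreachable.  A shortest walk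
    is a simple path, so it has fewer than #|V| edges; hence searching
    n in [0, #|V|) suffices. *)
Definition dist (E : rel V) (s v : V) : option nat :=
  let l := find (fun n => 0 < walk_count E s v n) (iota 0 #|V|) in
  if l < #|V| then Some l else None.

Definition nsp (E : rel V) (s v : V) : nat :=
  if dist E s v is Some n then walk_count E s v n else 0.

Definition olt (a b : option nat) : bool :=
  match a, b with
  | Some x, Some y => x < y
  | Some _, None => true
  | None, _ => false
  end.

Definition is_pred (E : rel V) (d : V -> option nat) (z v : V) : bool :=
  E z v && (if d z is Some m then d v == Some m.+1 else false).

Definition insert_batch (E : rel V) (beta : seq (V * V)) : rel V :=
  fun u v => [|| E u v, (u, v) \in beta | (v, u) \in beta].

Definition dmax (E : rel V) (s : V) : nat := \max_(v : V) odflt 0 (dist E s v).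

Definition affected (E : rel V) (beta : seq (V * V)) (s : V) : {set V} :=
  [set v | (dist E s v != dist (insert_batch E beta) s v)
           || (nsp E s v != nsp (insert_batch E beta) s v)].

Definition normA (E : rel V) (beta : seq (V * V)) (s : V) : nat :=
  let A := affected E beta s in
  let E' := insert_batch E beta in
  #|A| + #|[set e : {set V} | [exists u, exists v,
              (e == [set u; v]) && E' u v && ((u \in A) || (v \in A))]]|.

Inductive color := White | Gray | Black.
Definition is_white c := if c is White then true else false.
Definition is_black c := if c is Black then true else false.

Record state := St {
  col : V -> color;
  dd : V -> option nat;
  sg : V -> nat;
  pr : V -> seq V;
  Q : nat -> seq V;               (* array of FIFO queues (head = front) *)
  enq : seq V;                    (* nodes that have been in some queue *)
  cost : nat
}.

Definition upd {A : eqType} {B : Type} (f : A -> B) (x : A) (y : B) : A -> B :=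
  fun z => if z == x then y else f z.

Definition tick (st : state) : state :=
  St (col st) (dd st) (sg st) (pr st) (Q st) (enq st) (cost st).+1.

Definition enqueue (st : state) (k : nat) (x : V) : state :=
  St (col st) (dd st) (sg st) (pr st) (upd (Q st) k (rcons (Q st k) x))
     (x :: enq st) (cost st).+1.

Definition set_col (st : state) (x : V) (c : color) : state :=
  St (upd (col st) x c) (dd st) (sg st) (pr st) (Q st) (enq st) (cost st).

(* Step (i), for one inserted edge e = {u,v}: insert it (one step) and enqueue. *)
Definition batch_edge (st : state) (e : V * V) : state :=
  let: (u, v) := e in
  let st := tick st in
  let st := if olt (dd st u) (dd st v)
            then enqueue st (odflt 0 (dd st u)).+1 v else st in
  if olt (dd st v) (dd st u)
  then enqueue st (odflt 0 (dd st v)).+1 u else st.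

Definition process_nbr (k : nat) (w : V) (st : state) (z : V) : state :=
  let st := tick st in
  let st := if (if dd st z is Some m then dd st w == Some m.+1 else false)
            then St (col st) (dd st) (upd (sg st) w (sg st w + sg st z))
                    (upd (pr st) w (rcons (pr st w) z)) (Q st) (enq st) (cost st)
            else st in
  (* d_s(z) >= d_s(w) + 1, with d_s(z) = +infinity allowed *)
  if is_white (col st z) && olt (dd st w) (dd st z)
  then enqueue (set_col st z Gray) k.+1 z
  else st.

(* Step (ii), handling a node w dequeued from Q[k]; the incident edges of w
   in the updated graph E' are scanned through its adjacency list. *)
Definition process (E' : rel V) (k : nat) (st : state) (w : V) : state :=
  let st := tick st in
  if is_black (col st w) then st else
  let st := St (upd (col st) w Black) (upd (dd st) w (Some k)) (upd (sg st) w 0)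
               (upd (pr st) w [::]) (Q st) (enq st) (cost st) in
  foldl (process_nbr k w) st [seq z <- enum V | E' w z].

(* Empty Q[k] in FIFO order.  Processing level k only enqueues into Q[k+1],
   so Q[k] does not grow while it is being emptied. *)
Definition level (E' : rel V) (st : state) (k : nat) : state :=
  let st := tick st in
  let st' := foldl (process E' k) st (Q st k) in
  St (col st') (dd st') (sg st') (pr st') (upd (Q st') k [::]) (enq st') (cost st').

Definition reset_one (st : state) (x : V) : state := tick (set_col st x White).

Definition UpdateSSSP (E : rel V) (s : V) (beta : seq (V * V))
    (d : V -> option nat) (sigma : V -> nat) (P : V -> seq V) : state :=
  let E' := insert_batch E beta in
  let D := dmax E s in
  (* all nodes white; creating the array of d_max empty queues costs d_max *)
  let st0 := St (fun _ => White) d sigma P (fun _ => [::]) [::] D in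
  let st1 := foldl batch_edge st0 beta in
  let st2 := foldl (level E') st1 (iota 1 D.-1) in          (* step (ii): k = 1 .. d_max - 1 *)
  foldl reset_one st2 (enq st2).

End SSSP.

(* Amortized analysis with a potential.  Before level k, a state carries
     cost + #|enq| + (entries still waiting in Q[k], ..., Q[d_max - 1])
     + 4 * sum over the not yet blackened affected nodes w of (deg' w + 1),
   where deg' is the degree in the updated graph.  Each inserted edge raises it
   by at most 7, each level by at most 1, and every other elementary step is
   paid for by a decrease.  This rests on the invariant that every enqueued node
   is affected and has new distance at most its queue index: an inserted edge
   that brings v closer to s yields a new shortest walk to v, and a neighbour z
   of an affected node w whose old distance exceeds that of w extends a new
   shortest walk to w.  So only affected nodes are blackened and scanned, and
   the initial potential is at most d_max + 4 (|A| + sum of degrees over A)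
   <= d_max + 8 ||A||, each edge being counted from at most two endpoints. *)

From mathcomp Require Import all_boot zify.
Set Implicit Arguments. Unset Strict Implicit. Unset Printing Implicit Defensive.

Section Distances.
Variables (V : finType) (E : rel V) (s : V).

Lemma dist_Some_walk v n : dist E s v = Some n ->
  exists t : seq V, [/\ size t = n, path E s t & last s t = v].
Proof.
rewrite /dist; set l := find _ _; case: ifP => // l_lt [<-].
have : has (fun n => 0 < walk_count E s v n) (iota 0 #|V|).
  by rewrite has_find size_iota.
move/(nth_find 0); rewrite -/l nth_iota // add0n /walk_count card_gt0.
case/set0Pn => t; rewrite inE => /andP[t_path /eqP t_last].
by exists t; rewrite size_tuple.
Qed.

Lemma dist_path_le t : path E s t ->
  exists2 n, dist E s (last s t) = Some n & n <= size t.
Proof.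
have short_walk t' : path E s t' -> size t' < #|V| ->
    exists2 n, dist E s (last s t') = Some n & n <= size t'.
  move=> t'_path t'_small; pose P n := 0 < walk_count E s (last s t') n.
  have P_size : P (size t').
    rewrite /P /walk_count card_gt0; apply/set0Pn; exists (in_tuple t').
    by rewrite inE /= t'_path eqxx.
  have find_le : find P (iota 0 #|V|) <= size t'.
    rewrite -ltnS; apply: find_ltn; rewrite take_iota.
    by apply/hasP; exists (size t'); rewrite // mem_iota add0n leq_min ltnSn.
  by exists (find P (iota 0 #|V|)); rewrite // /dist ifT // (leq_ltn_trans find_le).
move=> t_path; case: (ltnP (size t) #|V|) => [|t_big]; first exact: short_walk.
(* [dist] only searches lengths below #|V|: shorten the walk to a simple path. *)
case: (shortenP t_path) => t' t'_path t'_uniq _.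
have t'_small : size t' < #|V| by have /= <- := card_uniqP t'_uniq; apply: max_card.
have [n dist_n n_le] := short_walk t' t'_path t'_small.
by exists n; rewrite // (leq_trans n_le) // ltnW // (leq_trans t'_small).
Qed.

End Distances.

Section BatchInsertion.
Variables (V : finType) (E : rel V) (s : V) (beta : seq (V * V)).
Local Notation E' := (insert_batch E beta).
Local Notation A := (affected E beta s).

Lemma insert_batch_sub : subrel E E'.
Proof. by move=> u v; rewrite /insert_batch => ->. Qed.

Lemma insert_batch_irreflexive : irreflexive E ->
  (forall u v, (u, v) \in beta -> u != v) -> irreflexive E'.
Proof.
move=> E_irr beta_loopless x; rewrite /insert_batch E_irr /=.
by apply/negP => /orP[] /beta_loopless; rewrite eqxx.
Qed.

Lemma dist_insert_batch_le v m : dist E s v = Some m ->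
  exists2 n, dist E' s v = Some n & n <= m.
Proof.
case/dist_Some_walk => t [<- t_path <-].
by apply: dist_path_le; apply: sub_path t_path; apply: insert_batch_sub.
Qed.

Lemma walk_count_insert_batch_lt v n :
  walk_count E s v n < walk_count E' s v n <->
  exists t : n.-tuple V, [/\ path E' s t, last s t = v & ~~ path E s t].
Proof.
set old := [set t : n.-tuple V | path E s t && (last s t == v)].
set new := [set t : n.-tuple V | path E' s t && (last s t == v)].
have old_sub : old \subset new.
  apply/subsetP => t; rewrite !inE => /andP[t_path ->].
  by rewrite (sub_path insert_batch_sub t_path).
rewrite /walk_count -[_ < _]andTb -old_sub -properEcard.
split=> [old_new | [t [t_path t_last t_old]]].
  have [_ [t]] := properP old_new.
  rewrite /old /new !inE => /andP[t_path /eqP t_last].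
  by rewrite t_last eqxx andbT; exists t.
by apply/properP; split=> //; exists t;
  rewrite /old /new !inE ?t_path ?t_last ?eqxx ?(negbTE t_old).
Qed.

(* A shortest walk of the new graph that uses a new edge either is strictly
   shorter than all old walks or adds to the count of shortest walks. *)
Lemma new_shortest_walk_affected x t : dist E' s x = Some (size t) ->
  path E' s t -> last s t = x -> ~~ path E s t -> x \in A.
Proof.
move=> dist_x t_path t_last t_old; rewrite inE.
case: (eqVneq (dist E s x) (dist E' s x)) => //= same_dist.
rewrite /nsp same_dist dist_x neq_ltn; apply/orP; left.
by apply/walk_count_insert_batch_lt; exists (in_tuple t).
Qed.

Lemma affected_new_shortest_walk x n : x \in A -> dist E' s x = Some n ->
  exists t : seq V, [/\ size t = n, path E' s t, last s t = x & ~~ path E s t].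
Proof.
move=> x_aff dist_x; case: (eqVneq (dist E s x) (Some n)) => [old_dist | new_dist].
  have : nsp E s x < nsp E' s x.
    move: x_aff; rewrite inE old_dist dist_x eqxx /= ltn_neqAle eq_sym => ->.
    rewrite /nsp old_dist dist_x /walk_count; apply: subset_leq_card.
    apply/subsetP => t; rewrite !inE => /andP[t_path ->].
    by rewrite (sub_path insert_batch_sub t_path).
  rewrite /nsp old_dist dist_x => /walk_count_insert_batch_lt[t [? ? ?]].
  by exists t; rewrite size_tuple.
have [t [t_size t_path t_last]] := dist_Some_walk dist_x.
exists t; split=> //; apply/negP => t_old.
have [m old_m m_le] := dist_path_le t_old; rewrite t_last t_size in old_m m_le.
have [n' new_n' n'_le] := dist_insert_batch_le old_m.
move: new_n'; rewrite dist_x => -[n_n'].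
move: new_dist; rewrite old_m (_ : m = n) ?eqxx //.
by apply/eqP; rewrite eqn_leq m_le n_n'.
Qed.

Definition affected_within (j : nat) (x : V) : Prop :=
  x \in A /\ exists2 n, dist E' s x = Some n & n <= j.

Lemma new_edge_affected_within u v a : dist E s u = Some a ->
  E' u v -> ~~ E u v -> olt (Some a) (dist E s v) -> affected_within a.+1 v.
Proof.
move=> dist_u uv uv_new far_v; have [t [t_size t_path t_last]] := dist_Some_walk dist_u.
have tv_path : path E' s (rcons t v).
  by rewrite rcons_path (sub_path insert_batch_sub t_path) t_last.
have [n] := dist_path_le tv_path; rewrite last_rcons size_rcons t_size => dist_v n_le.
split; last by exists n.
case: (eqVneq (dist E s v) (dist E' s v)) => [same_dist|]; last by rewrite inE => ->.
have n_eq : n = a.+1.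
  by apply/eqP; rewrite eqn_leq n_le; move: far_v; rewrite same_dist dist_v.
apply: (new_shortest_walk_affected (t := rcons t v)); rewrite ?last_rcons //.
  by rewrite size_rcons t_size -n_eq.
by rewrite rcons_path t_last (negbTE uv_new) andbF.
Qed.

Lemma scanned_neighbour_affected_within w z k : affected_within k w ->
  E' w z -> olt (Some k) (dist E s z) -> affected_within k.+1 z.
Proof.
move=> [w_aff [j dist_w j_le]] wz far_z.
have [t [t_size t_path t_last t_new]] := affected_new_shortest_walk w_aff dist_w.
have tz_path : path E' s (rcons t z) by rewrite rcons_path t_path t_last.
have [n] := dist_path_le tz_path; rewrite last_rcons size_rcons t_size => dist_z n_le.
split; last by exists n; rewrite // (leq_trans n_le).
case: (eqVneq (dist E s z) (dist E' s z)) => [same_dist|]; last by rewrite inE => ->.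
have n_eq : n = j.+1.
  by apply/eqP; rewrite eqn_leq n_le; move: far_z; rewrite same_dist dist_z /=; lia.
apply: (new_shortest_walk_affected (t := rcons t z)); rewrite ?last_rcons //.
  by rewrite size_rcons t_size -n_eq.
by rewrite rcons_path (negbTE t_new).
Qed.

End BatchInsertion.

Lemma foldl_invariant_bound (S : Type) (T : eqType) (f : S -> T -> S)
    (I : S -> Prop) (P : T -> Prop) (phi : S -> nat) (c : nat) l st :
  (forall st x, I st -> P x -> I (f st x) /\ phi (f st x) <= phi st + c) ->
  I st -> {in l, forall x, P x} ->
  I (foldl f st l) /\ phi (foldl f st l) <= phi st + c * size l.
Proof.
move=> step; elim: l st => [|x l IHl] st Ist Pl /=; first by rewrite muln0 addn0.
have [Ist' phi_st'] := step st x Ist (Pl x (mem_head x l)).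
have [Ifin phi_fin] := IHl _ Ist' (fun y yl => Pl y (mem_behead (s := x :: l) yl)).
by split=> //; rewrite (leq_trans phi_fin) // mulnS addnA leq_add2r.
Qed.

Lemma sum_upd_size_rcons (T : Type) (q : nat -> seq T) i x a b :
  \sum_(a <= j < b) size (upd q i (rcons (q i) x) j) <= (\sum_(a <= j < b) size (q j)).+1.
Proof.
have -> : \sum_(a <= j < b) size (upd q i (rcons (q i) x) j)
          = \sum_(a <= j < b) size (q j) + \sum_(a <= j < b | j == i) 1.
  rewrite [X in _ + X]big_mkcond -big_split /=; apply: eq_bigr => j _.
  by rewrite /upd; case: eqP => [->|]; rewrite ?size_rcons ?addn1 ?addn0.
by rewrite big_nat1_eq; case: ifP => _; rewrite ?addn1 ?addn0.
Qed.

Section Degrees.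
Variables (V : finType) (R : rel V).

Definition degree (w : V) : nat := size [seq z <- enum V | R w z].

Definition incident_edges (A : {set V}) : {set {set V}} :=
  [set e : {set V} | [exists u, exists v,
     (e == [set u; v]) && R u v && ((u \in A) || (v \in A))]].

(* Each edge is counted at most twice, once from each endpoint: the pair
   (w, z) is recorded as the edge {w, z} plus the orientation bit. *)
Lemma sum_degree_leq_incident_edges (A : {set V}) : irreflexive R ->
  \sum_(w in A) degree w <= 2 * #|incident_edges A|.
Proof.
move=> R_irr; have degreeE w : degree w = \sum_(z | R w z) 1.
  by rewrite /degree -sum1_size big_filter big_enum_cond.
under eq_bigr do rewrite degreeE.
rewrite pair_big_dep sum1dep_card.
pose arcs := [set p : V * V | (p.1 \in A) && R p.1 p.2].
pose f (p : V * V) := ([set p.1; p.2], enum_rank p.1 < enum_rank p.2).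
have f_inj : {in arcs &, injective f}.
  move=> [a b] [c d]; rewrite !inE /= => /andP[_ ab] /andP[_ cd] [ab_cd ord].
  have neq_ab : a != b by apply: contraTneq ab => ->; rewrite R_irr.
  have neq_cd : c != d by apply: contraTneq cd => ->; rewrite R_irr.
  have a_cd : a \in [set c; d] by rewrite -ab_cd set21.
  have b_cd : b \in [set c; d] by rewrite -ab_cd set22.
  move: neq_ab ord; case/set2P: a_cd => ->; case/set2P: b_cd => ->;
    rewrite ?eqxx // => _.
  case: ltngtP => // /val_inj/enum_rank_inj dc.
  by rewrite dc eqxx in neq_cd.
rewrite -(card_in_imset f_inj) -card_bool -cardsT mulnC -cardsX.
apply/subset_leq_card/subsetP => _ /imsetP[[a b] + ->].
rewrite !inE /= andbT => /andP[aA ab].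
apply/existsP; exists a; apply/existsP; exists b.
by rewrite eqxx ab aA.
Qed.

End Degrees.

Section CostAnalysis.
Variables (V : finType) (E : rel V) (s : V) (beta : seq (V * V)).
Local Notation E' := (insert_batch E beta).
Local Notation A := (affected E beta s).
Local Notation D := (dmax E s).
Local Notation affected_within := (affected_within E s beta).

Definition pending (st : state V) (k : nat) : nat :=
  \sum_(k <= j < D) size (Q st j).

Definition scan_credit (st : state V) : nat :=
  \sum_(w in A) if is_black (col st w) then 0 else (degree E' w).+1.

Definition potential (st : state V) (k : nat) : nat :=
  cost st + size (enq st) + pending st k + 4 * scan_credit st.

Definition sound (st : state V) : Prop :=
  (forall x, ~~ is_black (col st x) -> dd st x = dist E s x) /\
  (forall j x, x \in Q st j -> affected_within j x).

Lemma potential_tick st k : potential (tick st) k = (potential st k).+1.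
Proof. by rewrite /potential /= !addSn. Qed.

Lemma potentialS st k : k < D -> potential st k = potential st k.+1 + size (Q st k).
Proof. by move=> k_lt; rewrite /potential /pending big_ltn //; lia. Qed.

Lemma scan_credit_eq st st' :
  (forall x, is_black (col st' x) = is_black (col st x)) -> scan_credit st' = scan_credit st.
Proof. by move=> black_eq; apply: eq_bigr => x _; rewrite black_eq. Qed.

Lemma scan_credit_blacken st st' w : w \in A -> ~~ is_black (col st w) ->
  col st' = upd (col st) w Black -> scan_credit st = scan_credit st' + (degree E' w).+1.
Proof.
move=> wA w_nonblack col_st'; rewrite /scan_credit !(bigD1 w wA) /= col_st' /upd eqxx.
rewrite (negbTE w_nonblack) add0n addnC; congr (_ + _).
by apply: eq_bigr => x /andP[_ /negbTE ->].
Qed.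

Lemma potential_enqueue st i x k : potential (enqueue st i x) k <= potential st k + 3.
Proof.
have := sum_upd_size_rcons (Q st) i x k D.
rewrite /potential (_ : scan_credit (enqueue st i x) = scan_credit st) //.
by rewrite /pending /=; lia.
Qed.

Lemma potential_set_col st x c k : ~~ is_black (col st x) -> ~~ is_black c ->
  potential (set_col st x c) k = potential st k.
Proof.
move=> x_nonblack c_nonblack; rewrite /potential (@scan_credit_eq st) //= => y.
by rewrite /upd; case: eqP => // ->; rewrite (negbTE x_nonblack) (negbTE c_nonblack).
Qed.

Lemma sound_enqueue st i x : sound st -> affected_within i x -> sound (enqueue st i x).
Proof.
case=> dd_ok Q_ok x_within; split=> //= j y; rewrite /upd.
case: eqP => [->|_]; last exact: Q_ok.
by rewrite mem_rcons inE => /orP[/eqP ->|]; last exact: Q_ok.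
Qed.

Lemma sound_set_col st x c : sound st -> ~~ is_black (col st x) -> sound (set_col st x c).
Proof.
case=> dd_ok Q_ok x_nonblack; split=> //= y; rewrite /upd.
by case: eqP => [->|_]; [move=> _; apply: dd_ok | apply: dd_ok].
Qed.

Definition enqueue_if_farther (st : state V) (u v : V) : state V :=
  if olt (dd st u) (dd st v) then enqueue st (odflt 0 (dd st u)).+1 v else st.

Lemma enqueue_if_farther_step st u v : E' u v -> ~~ E u v ->
  sound st -> dd st =1 dist E s ->
  let st' := enqueue_if_farther st u v in
  [/\ sound st', dd st' =1 dist E s & potential st' 1 <= potential st 1 + 3].
Proof.
move=> uv uv_new st_sound dd_dist /=; rewrite /enqueue_if_farther !dd_dist.
case: ifP => [far_v | _]; last by split=> //; rewrite leq_addr.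
split=> //; last exact: potential_enqueue.
apply: sound_enqueue => //; move: far_v.
case dist_u: (dist E s u) => [a|] // far_v.
exact: new_edge_affected_within dist_u uv uv_new far_v.
Qed.

Hypothesis E_sym : symmetric E.
Hypothesis beta_new : forall u v, (u, v) \in beta -> (u != v) && ~~ E u v.

Lemma batch_edge_step st e : sound st /\ dd st =1 dist E s -> e \in beta ->
  (sound (batch_edge st e) /\ dd (batch_edge st e) =1 dist E s) /\
  potential (batch_edge st e) 1 <= potential st 1 + 7.
Proof.
case: e => u v [st_sound dd_dist] uv_beta.
have /andP[_ uv_new] := beta_new uv_beta.
have uv : E' u v by rewrite /insert_batch uv_beta orbT.
have vu : E' v u by rewrite /insert_batch uv_beta !orbT.
have vu_new : ~~ E v u by rewrite E_sym.
have [st1_sound dd1 pot1] :=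
  enqueue_if_farther_step uv uv_new (st := tick st) st_sound dd_dist.
have [st2_sound dd2 pot2] := enqueue_if_farther_step vu vu_new st1_sound dd1.
have -> : batch_edge st (u, v) = enqueue_if_farther (enqueue_if_farther (tick st) u v) v u.
  by [].
by split=> //; move: pot1 pot2; rewrite potential_tick; lia.
Qed.

Lemma process_nbr_step k w : affected_within k w -> forall st z,
  sound st /\ dd st w = Some k -> E' w z ->
  (sound (process_nbr k w st z) /\ dd (process_nbr k w st z) w = Some k) /\
  potential (process_nbr k w st z) k.+1 <= potential st k.+1 + 4.
Proof.
move=> w_within st z [st_sound dd_w] wz; rewrite /process_nbr.
set found := match dd (tick st) z with Some m => _ | None => false end.
set st1 := if found then _ else tick st.
have [col1 dd1 Q1 enq1 cost1] : [/\ col st1 = col st, dd st1 = dd st, Q st1 = Q st,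
    enq st1 = enq st & cost st1 = (cost st).+1] by rewrite /st1; case: ifP.
have st1_sound : sound st1 by rewrite /sound col1 dd1 Q1.
have pot1 : potential st1 k.+1 = (potential st k.+1).+1.
  by rewrite /potential /pending /scan_credit col1 Q1 enq1 cost1 !addSn.
case: ifP => [/andP[z_white far_z] | _]; last by rewrite dd1 pot1; split=> //; lia.
have z_nonblack : ~~ is_black (col st1 z) by case: (col st1 z) z_white.
move: far_z; rewrite (proj1 st1_sound z z_nonblack) dd1 dd_w => far_z.
have z_within := scanned_neighbour_affected_within w_within wz far_z.
split; first split.
- by apply: sound_enqueue => //; apply: sound_set_col.
- by rewrite /= dd1.
- have := potential_enqueue (set_col st1 z Gray) k.+1 z k.+1.
  by rewrite potential_set_col // pot1; lia.
Qed.

Lemma process_step k st w : sound st -> affected_within k w ->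
  sound (process E' k st w) /\ potential (process E' k st w) k.+1 <= potential st k.+1 + 1.
Proof.
move=> st_sound w_within; rewrite /process /=.
case: ifP => [_ | w_white]; first by rewrite potential_tick addn1.
set st2 := St _ _ _ _ _ _ _.
have st2_sound : sound st2.
  split; last exact: st_sound.2.
  by move=> x; rewrite /= /upd; case: eqP => // _; apply: st_sound.1.
have dd_w : dd st2 w = Some k by rewrite /= /upd eqxx.
have nbrs : {in [seq z <- enum V | E' w z], forall z, E' w z}.
  by move=> z; rewrite mem_filter => /andP[].
have [[st'_sound _] pot'] :=
  foldl_invariant_bound (I := fun st => sound st /\ dd st w = Some k)
    (phi := potential^~ k.+1) (process_nbr_step w_within) (conj st2_sound dd_w) nbrs.
split=> //; rewrite (leq_trans pot') //.
have credit : scan_credit st = scan_credit st2 + (degree E' w).+1.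
  by apply: scan_credit_blacken; [exact: w_within.1 | exact: negbT | ].
rewrite /potential -/(degree E' w) credit (_ : pending st2 k.+1 = pending st k.+1) //=.
lia.
Qed.

Lemma level_step k st : sound st -> k < D ->
  sound (level E' st k) /\ potential (level E' st k) k.+1 <= potential st k + 1.
Proof.
move=> st_sound k_lt; rewrite /level.
have [st1_sound pot1] := foldl_invariant_bound (I := sound) (phi := potential^~ k.+1)
  (st := tick st) (@process_step k) st_sound (st_sound.2 k).
set st1 := foldl _ _ _ in st1_sound pot1 *.
split.
  split; first exact: st1_sound.1.
  by move=> j x; rewrite /= /upd; case: eqP => // _; apply: st1_sound.2.
have -> : potential (St (col st1) (dd st1) (sg st1) (pr st1) (upd (Q st1) k [::])
    (enq st1) (cost st1)) k.+1 = potential st1 k.+1.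
  rewrite /potential /pending; congr (_ + _ + _); apply: eq_big_nat => j /andP[kj _].
  by rewrite /= /upd gtn_eqF.
by move: pot1; rewrite potential_tick (potentialS st k_lt) /=; lia.
Qed.

Lemma levels_step n a st : sound st -> {in iota a n, forall k, k < D} ->
  sound (foldl (level E') st (iota a n)) /\
  potential (foldl (level E') st (iota a n)) (a + n) <= potential st a + n.
Proof.
elim: n a st => [|n IHn] a st st_sound lt_D /=; first by rewrite !addn0.
have [st1_sound pot1] := level_step st_sound (lt_D a (mem_head a _)).
have [st2_sound pot2] := IHn a.+1 _ st1_sound
  (fun k k_in => lt_D k (mem_behead (s := a :: iota a.+1 n) k_in)).
by split=> //; rewrite -addSnnS; move: pot1 pot2; lia.
Qed.

Lemma scan_credit_leq st : irreflexive E' ->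
  scan_credit st <= #|A| + 2 * #|incident_edges E' A|.
Proof.
move=> E'_irr; have := sum_degree_leq_incident_edges A E'_irr.
rewrite -(leq_add2l #|A|); apply: leq_trans.
rewrite -sum1_card -big_split /=; apply: leq_sum => w _.
by case: ifP; rewrite // add1n.
Qed.

End CostAnalysis.

Lemma reset_cost (V : finType) (st : state V) l :
  cost (foldl (@reset_one V) st l) = cost st + size l.
Proof. by elim: l st => [|x l IHl] st /=; rewrite ?addn0 // IHl addnS. Qed.

Theorem theorem3 :
  exists c : nat, forall (V : finType) (E : rel V) (s : V) (beta : seq (V * V))
    (d : V -> option nat) (sigma : V -> nat) (P : V -> seq V),
    symmetric E -> irreflexive E ->
    (forall u v, (u, v) \in beta -> (u != v) && ~~ E u v) ->
    (forall v, d v = dist E s v) ->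
    (forall v, sigma v = nsp E s v) ->
    (forall v, P v =i [pred z | is_pred E (dist E s) z v]) ->
    cost (UpdateSSSP E s beta d sigma P)
      <= c * (size beta + normA E beta s + dmax E s + 1).
Proof.
(* The running time does not depend on the initial sigma and P. *)
exists 8 => V E s beta d sigma P E_sym E_irr beta_new d_dist _ _.
have E'_irr : irreflexive (insert_batch E beta).
  by apply: insert_batch_irreflexive => // u v /beta_new /andP[].
rewrite /UpdateSSSP; set st0 := St _ _ _ _ _ _ _.
have st0_ok : sound E s beta st0 /\ dd st0 =1 dist E s by split; first split.
have [[st1_sound _] pot1] := foldl_invariant_bound (phi := (potential E s beta)^~ 1)
  (batch_edge_step E_sym beta_new) st0_ok (fun e e_beta => e_beta).
set st1 := foldl _ st0 beta in st1_sound pot1 *.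
have levels_lt : {in iota 1 (dmax E s).-1, forall k, k < dmax E s}.
  by move=> k; rewrite mem_iota; lia.
have [_ pot2] := levels_step st1_sound levels_lt.
set st2 := foldl _ st1 _ in pot2 *.
have pending0 : pending E s st0 1 = 0 by rewrite /pending big1.
have credit0 := scan_credit_leq s st0 E'_irr.
have -> : normA E beta s = #|affected E beta s|
    + #|incident_edges (insert_batch E beta) (affected E beta s)| by [].
set n_edges := #|incident_edges _ _| in credit0 *.
rewrite reset_cost; move: pot1 pot2; rewrite /potential pending0 /=; lia.
Qed.
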